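(* Let $\mathbf{F}\in\mathbb{K}[x]^{n\times n}$ be nonsingular and column reduced with column degrees $\vec d=[d_1,\dots,d_n]$, $d_{\max}=\max_i d_i$, let $\mathbf{H}$ be its Hermite normal form, $s_i=\deg h_{ii}$, $\vec s=[s_1,\dots,s_n]$. For each $i$ let $q_i,r_i$ be the quotient and remainder of $s_i$ divided by $d_{\max}$, let $\tilde{\mathbf{E}}_i=[e_i,\,x^{s_i-q_id_{\max}}e_i,\,x^{s_i-(q_i-1)d_{\max}}e_i,\dots,x^{s_i-d_{\max}}e_i]$ ($q_i+1$ columns, $e_i$ the $i$-th column of the $n\times n$ identity), $\mathbf{E}=[\tilde{\mathbf{E}}_1,\dots,\tilde{\mathbf{E}}_n]\in\mathbb{K}[x]^{n\times\bar n}$ with $\bar n=n+\sum_i q_i$, and $\vec{s^*}=[\vec{s^*}_1,\dots,\vec{s^*}_n]\in\mathbb{Z}^{\bar n}$ with $\vec{s^*}_i=[r_i,d_{\max},\dots,d_{\max}]$ ($q_i+1$ components). Suppose $\mathbf{E}=\mathbf{F}\mathbf{Q}+\mathbf{R}$ with $\mathbf{Q},\mathbf{R}$ polynomial matrices and $\deg\mathbf{R}<d_{\max}$. Let $\vec{u^*}=[2d_{\max},\dots,2d_{\max}]\in\mathbb{Z}^n$ and let $\mathbf{N}=\begin{bmatrix}\mathbf{N}_u\\ \mathbf{N}_d\end{bmatrix}$ be a $[-\vec{u^*},-\vec{s^*}]$-minimal right kernel basis of $[\mathbf{F},-\mathbf{R}]$, where $\mathbf{N}_d$ consists of the last $\bar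 n$ rows. Let $\bar{\mathbf{N}}$ be the matrix of the columns of $\mathbf{N}_d$ whose $-\vec{s^*}$-column degrees are at most $0$. Then $\mathbf{H}$ is a column basis of $\mathbf{E}\bar{\mathbf{N}}$, and the nonzero columns of $\mathbf{E}\bar{\mathbf{N}}$ have $-\vec s$-column degree $0$.
   Context: $\mathbb{K}$ is a field. Hermite normal form of nonsingular $\mathbf{F}$: the unique $\mathbf{H}=\mathbf{F}\mathbf{U}$, $\mathbf{U}$ unimodular, lower triangular with monic diagonal entries $h_{ii}$ and $\deg h_{ij}<\deg h_{ii}$ for $j<i$. For a column vector $\mathbf{p}=[p_1,\dots,p_m]^T$ and shift $\vec t\in\mathbb{Z}^m$, $\mathrm{cdeg}_{\vec t}\,\mathbf{p}=\max_i(\deg p_i+t_i)$; for a matrix, the list of these for its columns. With $\vec c$ the column degrees of $\mathbf{P}$, $\mathbf{P}$ is column reduced if the matrix of coefficients of $x^{c_j}$ in $p_{ij}$ has full column rank, and $\vec t$-column reduced if $\mathrm{diag}(x^{t_1},\dots,x^{t_m})\mathbf{P}$ is column reduced. A right kernel basis of $\mathbf{A}$ is a full-rank $\mathbf{N}$ with $\mathbf{A}\mathbf{N}=0$ whose columns generate $\{\mathbf{q}:\mathbf{A}\mathbf{q}=0\}$ over $\mathbb{K}[x]$; it is $\vec t$-minimal if also $\vec t$-column reduced. A column basis of $\mathbf{A}$ is a full-rank matrix whose columns form a basis of the $\mathbb{K}[x]$-module generated by the columns of $\mathbf{A}$. $\deg\mathbf{R}$ is the maximum degree of the entries of $\mathbf{R}$.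 *)

From HB Require Import structures.
From mathcomp Require Import all_boot all_order all_algebra.
Set Implicit Arguments. Unset Strict Implicit. Unset Printing Implicit Defensive.
Import Order.TTheory GRing.Theory Num.Theory.
Local Open Scope ring_scope.

Section PolyMatrixDefs.
Context {K : fieldType}.

(* degree of a NONZERO polynomial (only used on nonzero polynomials) *)
Definition pdeg (p : {poly K}) : int := ((size p).-1)%:Z.

Definition omax (a b : option int) : option int :=
  match a, b with
  | None, _ => b
  | _, None => a
  | Some x, Some y => Some (Num.max x y)
  end.

(* t-shifted column degree of column j of P : max_i (deg p_ij + t_i);
   None stands for -oo (zero column). *)
Definition cdeg m n (t : 'I_m -> int) (P : 'M[{poly K}]_(m, n)) (j : 'I_n)
  : option int :=
  \big[omax/None]_(i < m | P i j != 0) Some (pdeg (P i j) + t i).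

Definition cdeg_le m n (t : 'I_m -> int) (P : 'M[{poly K}]_(m, n)) (j : 'I_n)
  (b : int) : bool :=
  if cdeg t P j is Some c then c <= b else true.

Definition lmat m n (t : 'I_m -> int) (P : 'M[{poly K}]_(m, n)) : 'M[K]_(m, n) :=
  \matrix_(i, j)
    match cdeg t P j with
    | Some c => if 0 <= c - t i then (P i j)`_(absz (c - t i)) else 0
    | None => 0
    end.

Definition col_reduced_shift m n (t : 'I_m -> int) (P : 'M[{poly K}]_(m, n)) :=
  \rank (lmat t P) = n.

Definition col_reduced m n (P : 'M[{poly K}]_(m, n)) :=
  col_reduced_shift (fun _ => 0) P.

Definition full_col_rank m n (P : 'M[{poly K}]_(m, n)) :=
  forall v : 'cV[{poly K}]_n, P *m v = 0 -> v = 0.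

Definition right_kernel_basis m p k (A : 'M[{poly K}]_(m, p))
  (N : 'M[{poly K}]_(p, k)) :=
  [/\ full_col_rank N, A *m N = 0 &
      forall q : 'cV[{poly K}]_p, A *m q = 0 ->
        exists v : 'cV[{poly K}]_k, q = N *m v].

Definition minimal_kernel_basis m p k (A : 'M[{poly K}]_(m, p))
  (N : 'M[{poly K}]_(p, k)) (t : 'I_p -> int) :=
  right_kernel_basis A N /\ col_reduced_shift t N.

Definition column_basis m p r (A : 'M[{poly K}]_(m, p)) (B : 'M[{poly K}]_(m, r)) :=
  [/\ full_col_rank B,
      exists U : 'M[{poly K}]_(r, p), A = B *m U &
      exists V : 'M[{poly K}]_(p, r), B = A *m V].

Definition unimodular n (U : 'M[{poly K}]_n) :=
  exists V : 'M[{poly K}]_n, U *m V = 1%:M /\ V *m U = 1%:M.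

Definition hermite_form n (F H : 'M[{poly K}]_n) :=
  [/\ exists U : 'M[{poly K}]_n, unimodular U /\ H = F *m U,
      forall i j : 'I_n, (i < j)%N -> H i j = 0,
      forall i : 'I_n, H i i \is monic &
      forall i j : 'I_n, (j < i)%N -> (size (H i j) < size (H i i))%N].

Definition coldeg m n (F : 'M[{poly K}]_(m, n)) (j : 'I_n) : nat :=
  (\max_(i < m) (size (F i j)).-1)%N.
Definition dmax n (F : 'M[{poly K}]_n) : nat := (\max_(j < n) coldeg F j)%N.

Definition sdeg n (H : 'M[{poly K}]_n) (i : 'I_n) : nat := (size (H i i)).-1.
Definition qq n (F H : 'M[{poly K}]_n) (i : 'I_n) : nat := (sdeg H i %/ dmax F)%N.
Definition rr n (F H : 'M[{poly K}]_n) (i : 'I_n) : nat := (sdeg H i %% dmax F)%N.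
Definition nbar n (F H : 'M[{poly K}]_n) : nat := (\sum_(i < n) (qq F H i).+1)%N.

Definition Etilde n (F H : 'M[{poly K}]_n) (i : 'I_n)
  : 'M[{poly K}]_(n, (qq F H i).+1) :=
  \matrix_(r, k)
    if r == i then
      (if k == ord0 then 1
       else 'X^(sdeg H i - (qq F H i - (k : nat).-1) * dmax F)%N)
    else 0.
Arguments Etilde {n} F H i.

Definition Emat n (F H : 'M[{poly K}]_n) : 'M[{poly K}]_(n, nbar F H) :=
  \mxrow_(i < n) Etilde F H i.

Definition sstar_row n (F H : 'M[{poly K}]_n) : 'rV[int]_(nbar F H) :=
  \mxrow_(i < n)
    (\row_(k < (qq F H i).+1)
       (if k == ord0 then (rr F H i)%:Z else (dmax F)%:Z)).

Definition sstar n (F H : 'M[{poly K}]_n) (j : 'I_(nbar F H)) : int :=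
  sstar_row F H 0 j.
Arguments sstar {n} F H j.

Definition kshift n (F H : 'M[{poly K}]_n) (j : 'I_(n + nbar F H)) : int :=
  match split j with
  | inl _ => - ((2 * dmax F)%N)%:Z
  | inr j' => - sstar F H j'
  end.
Arguments kshift {n} F H j.

Definition selcols m k (P : pred 'I_k) (M : 'M[{poly K}]_(m, k))
  : 'M[{poly K}]_(m, #|P|) :=
  colsub (@enum_val _ (mem P)) M.

End PolyMatrixDefs.
Arguments sstar {K n} F H j.
Arguments kshift {K n} F H j.
Arguments Etilde {K n} F H i.

(* Since F = H V, every column of
   E Nbar = F (Q Nd + Nu) lies in the column module of H.  Conversely a column
   h of H has row degrees at most s, so h = E v with v bounded by s*; then
   (col U - Q v, v) lies in the kernel of [F, -R], and because deg R < dmax and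
   F is column reduced it has [-u*, -s*]-degree at most 0.  By the predictable
   degree property of the minimal basis N it only involves columns of N of
   nonpositive shifted degree, so v is a combination of the columns of Nbar.
   Finally the columns of E Nbar have row degrees at most s, and the first
   nonzero entry of their coordinates in H, which is lower triangular with monic
   diagonal, gives a row where the degree s_i is attained. *)

From HB Require Import structures.
From mathcomp Require Import all_boot all_order all_algebra.
From mathcomp Require Import zify.
Set Implicit Arguments. Unset Strict Implicit. Unset Printing Implicit Defensive.
Import Order.TTheory GRing.Theory Num.Theory.
Local Open Scope ring_scope.

Variant omax_big_spec (I : eqType) (r : seq I) (P : pred I) (f : I -> int) :
    option int -> Prop :=
  | OmaxNone of (forall i, i \in r -> ~~ P i) : omax_big_spec r P f None
  | OmaxSome c of (forall i, i \in r -> P i -> f i <= c)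
      & (exists2 i, i \in r & P i /\ c = f i) : omax_big_spec r P f (Some c).

Lemma omax_bigP (I : eqType) (r : seq I) (P : pred I) (f : I -> int) :
  omax_big_spec r P f (\big[omax/None]_(i <- r | P i) Some (f i)).
Proof.
elim: r => [|a r IH]; first by rewrite big_nil; constructor.
rewrite big_cons; case: ifP => Pa; case: IH => [Hn | c Hb [i ir [Pi ci]]] /=.
- constructor; last by exists a; rewrite ?mem_head.
  by move=> i; rewrite inE => /orP[/eqP->//|/Hn /negPf->].
- constructor => [j|].
    by move=> + Pj; rewrite inE le_max => /orP[/eqP->|jr]; rewrite ?lexx // Hb ?orbT.
  case: (leP (f a) c) => _; last by exists a; rewrite ?mem_head.
  by exists i; rewrite ?inE ?ir ?orbT.
- by constructor=> i; rewrite inE => /orP[/eqP->|/Hn]; rewrite ?Pa.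
- constructor=> [j|]; first by rewrite inE => /orP[/eqP->|/Hb//]; rewrite Pa.
  by exists i; rewrite ?inE ?ir ?orbT.
Qed.

Section MatrixMul.
Variable R : pzSemiRingType.

Lemma col_mul m n p j (A : 'M[R]_(m, n)) (B : 'M[R]_(n, p)) :
  col j (A *m B) = A *m col j B.
Proof. by rewrite !colE mulmxA. Qed.

Lemma lower_triangular_mul_col n p (H : 'M[R]_n) (B : 'M[R]_(n, p)) j :
  (forall i k : 'I_n, (i < k)%N -> H i k = 0) -> col j B != 0 ->
  exists2 i, B i j != 0 & (H *m B) i j = H i i * B i j.
Proof.
move=> Hlow Bj0.
have [i0 Bi0] : exists i, B i j != 0.
  apply/existsP; apply: contraNT Bj0 => /existsPn Bj0; apply/eqP/matrixP => a b.
  by rewrite ord1 !mxE; apply/eqP; rewrite -[_ == _]negbK Bj0.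
have [i Bi imin] := @arg_minnP _ i0 (fun i => B i j != 0) (@nat_of_ord n) Bi0.
exists i => //; rewrite mxE (bigD1 i) //= big1 ?addr0 // => l li.
case: (ltngtP l i) => [l_i|i_l|/val_inj eli]; last by rewrite eli eqxx in li.
- by have [->|/imin] := eqVneq (B l j) 0; rewrite ?mulr0 // leqNgt l_i.
- by rewrite Hlow // mul0r.
Qed.

End MatrixMul.

Section ColumnDegrees.
Variable K : fieldType.
Implicit Types p q : {poly K}.

Lemma pdeg_le p (b : nat) : (pdeg p <= b%:Z) = (size p <= b.+1)%N.
Proof. by rewrite /pdeg lez_nat; case: size. Qed.

Variant cdeg_spec m n (t : 'I_m -> int) (P : 'M[{poly K}]_(m, n)) (j : 'I_n) :
    option int -> Prop :=
  | CdegNone of (forall i, P i j = 0) : cdeg_spec t P j None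
  | CdegSome c of (forall i, P i j != 0 -> pdeg (P i j) + t i <= c)
      & (exists2 i, P i j != 0 & c = pdeg (P i j) + t i) :
      cdeg_spec t P j (Some c).

Lemma cdegP m n (t : 'I_m -> int) (P : 'M[{poly K}]_(m, n)) j :
  cdeg_spec t P j (cdeg t P j).
Proof.
rewrite /cdeg; case: omax_bigP => [Hn | c Hb [i _ [Pi ci]]].
  by constructor=> i; apply/eqP; rewrite -[_ == _]negbK Hn ?mem_index_enum.
by constructor=> [i0|]; [exact: Hb (mem_index_enum _) | exists i].
Qed.

Lemma cdeg_leP m n (t : 'I_m -> int) (P : 'M[{poly K}]_(m, n)) j b :
  reflect (forall i, P i j != 0 -> pdeg (P i j) + t i <= b) (cdeg_le t P j b).
Proof.
rewrite /cdeg_le; apply: (iffP idP); case: cdegP => [Hz | c Hb [i Pi ci]] //.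
- by move=> _ i; rewrite Hz eqxx.
- by move=> cb i' Pi'; apply: le_trans (Hb _ Pi') cb.
- by move=> H; rewrite ci H.
Qed.

Lemma cdeg_ub m n (t : 'I_m -> int) (P : 'M[{poly K}]_(m, n)) j c i :
  cdeg t P j = Some c -> P i j != 0 -> pdeg (P i j) + t i <= c.
Proof. by case: cdegP => // c' Hb _ [<-]; apply: Hb. Qed.

Lemma cdeg_eq m n (t : 'I_m -> int) (P : 'M[{poly K}]_(m, n)) j c i :
  (forall i, P i j != 0 -> pdeg (P i j) + t i <= c) ->
  P i j != 0 -> c <= pdeg (P i j) + t i -> cdeg t P j = Some c.
Proof.
move=> Hb Pi ci; case: cdegP => [Hz | c' Hb' [i' Pi' ci']]; first by rewrite Hz eqxx in Pi.
by congr Some; apply/eqP; rewrite eq_le {1}ci' Hb //= (le_trans ci (Hb' _ Pi)).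
Qed.

Lemma coefM_top p q a b : (size p <= a.+1)%N -> (size q <= b.+1)%N ->
  (p * q)`_(a + b) = p`_a * q`_b.
Proof.
move=> sp sq; rewrite coefM (bigD1 (Ordinal (ltn_addr b (ltnSn a)))) //= big1 ?addr0.
  by rewrite addKn.
move=> i /eqP ne; have : (val i != a) by apply/eqP=> e; apply: ne; apply: val_inj.
case: (ltngtP i a) => // ia _.
  by rewrite (nth_default 0 (_ : size q <= a + b - i)%N) ?mulr0 //; apply: leq_trans sq _; lia.
by rewrite (nth_default 0 (_ : size p <= i)%N) ?mul0r //; apply: leq_trans sp _; lia.
Qed.

Lemma coefM_shifted_top p q (a c M : int) :
  q != 0 -> (p != 0 -> pdeg p + a <= c) -> pdeg q + c <= M -> 0 <= M - a ->
  (p * q)`_(absz (M - a)) =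
    (if 0 <= c - a then p`_(absz (c - a)) else 0) *
    (if pdeg q + c == M then lead_coef q else 0).
Proof.
move=> qnz hp hq hMa; have [->|pnz] := eqVneq p 0.
  by rewrite mul0r coef0; case: ifP; rewrite ?coef0 ?mul0r.
have := hp pnz; rewrite /pdeg => {}hp; move: hq; rewrite /pdeg => hq.
have sq : (0 < size q)%N by rewrite size_poly_gt0.
have sp : (0 < size p)%N by rewrite size_poly_gt0.
have -> : 0 <= c - a by lia.
case: eqP => [eM | neM].
  have -> : absz (M - a) = (absz (c - a) + (size q).-1)%N by lia.
  by rewrite coefM_top ?lead_coefE //; lia.
rewrite mulr0 nth_default //; apply: leq_trans (size_polyMleq _ _) _.
move/eqP: neM; lia.
Qed.

End ColumnDegrees.

Section PredictableDegree.
Variables (K : fieldType) (m p : nat) (t : 'I_m -> int) (P : 'M[{poly K}]_(m, p)).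
Hypothesis Pred : col_reduced_shift t P.

Lemma lmat_mul_eq0 (lam : 'cV[K]_p) : lmat t P *m lam = 0 -> lam = 0.
Proof.
move=> hl; apply: trmx_inj; rewrite trmx0; apply/eqP.
have hf : row_free (lmat t P)^T by rewrite /row_free mxrank_tr Pred.
by rewrite -(mulmx_free_eq0 _ hf) -trmx_mul hl trmx0.
Qed.

Lemma col_reduced_cdeg j : exists c, cdeg t P j = Some c.
Proof.
case e: (cdeg t P j) => [c|]; first by exists c.
have : lmat t P *m (delta_mx j 0 : 'cV[K]_p) = 0.
  apply/matrixP=> i k; rewrite !mxE (bigD1 j) //= big1 ?addr0.
    by rewrite !mxE e mul0r.
  by move=> l /negPf ne; rewrite !mxE ne mulr0.
move/lmat_mul_eq0/matrixP/(_ j 0); rewrite !mxE !eqxx => /eqP.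
by rewrite oner_eq0.
Qed.

Section ColumnDegreesGiven.
Variable c : 'I_p -> int.
Hypothesis Pcdeg : forall j, cdeg t P j = Some (c j).

Definition lead_vec (w : 'cV[{poly K}]_p) (M : int) : 'cV[K]_p :=
  \col_j (if (w j ord0 != 0) && (pdeg (w j ord0) + c j == M) then lead_coef (w j ord0) else 0).

Lemma lmat_mul_lead_vec (w : 'cV[{poly K}]_p) (M : int) i :
  (forall j, w j ord0 != 0 -> pdeg (w j ord0) + c j <= M) ->
  (lmat t P *m lead_vec w M) i ord0 =
    if 0 <= M - t i then ((P *m w) i ord0)`_(absz (M - t i)) else 0.
Proof.
move=> wM; rewrite !mxE; case: ifP => hMt.
  rewrite coef_sum; apply: eq_bigr => j _; rewrite !mxE Pcdeg.
  have [->|wnz] := eqVneq (w j ord0) 0; first by rewrite mulr0 /= mulr0 coef0.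
  rewrite (coefM_shifted_top wnz _ (wM j wnz) hMt) //.
  by move=> Pnz; apply: cdeg_ub.
rewrite big1 // => j _; rewrite !mxE Pcdeg.
case: ifP => [hct|]; last by rewrite mul0r.
case: ifP => [/andP[wnz /eqP wM'] | _]; last by rewrite mulr0.
by move: hMt hct wM'; rewrite /pdeg; lia.
Qed.

Lemma cdeg_mul_ge (w : 'cV[{poly K}]_p) j0 : w j0 ord0 != 0 ->
  exists2 c', cdeg t (P *m w) ord0 = Some c' & pdeg (w j0 ord0) + c j0 <= c'.
Proof.
(* With M the largest shifted degree w_j + c_j, the column reducedness makes
   lmat t P *m lead_vec w M nonzero, and its entries are the coefficients of
   x^(M - t_i) in P w. *)
move=> wj0; pose wdeg j := pdeg (w j ord0) + c j.
have [jm wjm Hjm] := @Order.TotalTheory.arg_maxP _ _ _ j0 (fun j => w j ord0 != 0) wdeg wj0.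
set M := wdeg jm.
have [i hi] : exists i, (lmat t P *m lead_vec w M) i ord0 != 0.
  apply/existsP; rewrite -negb_forall; apply/negP => /forallP H.
  suff /matrixP/(_ jm ord0) : lead_vec w M = 0.
    by rewrite !mxE wjm eqxx /= => /eqP; rewrite lead_coef_eq0 (negPf wjm).
  apply: lmat_mul_eq0; apply/matrixP => a b.
  by rewrite ord1 [RHS]mxE; apply/eqP; apply: H.
rewrite lmat_mul_lead_vec in hi; last exact: Hjm.
case: ifP hi => [hMt hi|]; last by rewrite eqxx.
have Pwi : (P *m w) i ord0 != 0 by apply: contraNneq hi => ->; rewrite coef0.
have hs : (absz (M - t i) < size ((P *m w) i ord0))%N.
  by rewrite ltnNge; apply: contraNN hi => hs; rewrite nth_default.
case: (cdegP t (P *m w) ord0) => [Hz | c' Hb _]; first by rewrite Hz eqxx in Pwi.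
exists c' => //; have := Hb _ Pwi; have := Hjm j0 wj0.
by move: hMt hs; rewrite /M /wdeg /pdeg /=; lia.
Qed.

End ColumnDegreesGiven.

Lemma cdeg_le_mul (w : 'cV[{poly K}]_p) b j : cdeg_le t (P *m w) ord0 b ->
  w j ord0 != 0 -> cdeg_le t P j (b - pdeg (w j ord0)).
Proof.
move=> /cdeg_leP Pwb wj; have [c Pc] := fin_all_exists col_reduced_cdeg.
have [c' Pwc' le_c'] := cdeg_mul_ge Pc wj.
apply/cdeg_leP => i Pij; have := cdeg_ub (Pc j) Pij.
case: cdegP Pwc' => // c'' _ [i' Pwi' ->] [<-] in le_c'.
by have := Pwb _ Pwi'; lia.
Qed.

End PredictableDegree.

Lemma poly_block_decomp (K : fieldType) d r q (p : {poly K}) :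
  (size p <= (q * d + r).+1)%N ->
  exists c : nat -> {poly K},
    [/\ p = c 0%N + \sum_(1 <= l < q.+1) c l * 'X^(r + l.-1 * d),
        (size (c 0%N) <= r.+1)%N &
        forall l, (1 <= l <= q)%N -> (size (c l) <= d.+1)%N].
Proof.
elim: q p => [|q IH] p hp.
  exists (fun l => if l == 0%N then p else 0); split.
  - by rewrite big_geq // addr0.
  - by move: hp; rewrite mul0n add0n.
  - by case.
pose pl := take_poly (r + q * d) p; pose ph := drop_poly (r + q * d) p.
have /IH [c [e0 e1 e2]] : (size pl <= (q * d + r).+1)%N.
  by apply: leq_trans (size_take_poly _ _) _; rewrite addnC leqnSn.
exists (fun l => if l == q.+1 then ph else c l); split => //.
- rewrite big_nat_recr //= eqxx /= (@eq_big_nat _ _ _ 1 q.+1 _ (fun l => c l * 'X^(r + l.-1 * d))).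
    by rewrite addrA -e0 /pl /ph poly_take_drop.
  by move=> l /andP[_ hl]; rewrite ifN // neq_ltn hl.
- move=> l /andP[h1 h2]; case: eqP => [_|ne].
    by rewrite /ph size_drop_poly; move: hp; rewrite mulSn; lia.
  by apply: e2; rewrite h1 /=; move: h2 ne; lia.
Qed.

Section ExpansionMatrix.
Variables (K : fieldType) (n : nat) (F H : 'M[{poly K}]_n).

(* A column index of [Emat F H] is a pair: a block [i] and a position in [Etilde F H i]. *)
Let blk (l : 'I_(nbar F H)) : 'I_n := tagnat.sig1 l.
Let pos (l : 'I_(nbar F H)) : 'I_(qq F H (blk l)).+1 := tagnat.sig2 l.

Definition sstar_nat (l : 'I_(nbar F H)) : nat :=
  if pos l == ord0 then rr F H (blk l) else dmax F.

Lemma sstarE l : sstar F H l = (sstar_nat l)%:Z.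
Proof. by rewrite /sstar /sstar_row /sstar_nat !mxE; case: ifP. Qed.

Lemma sstar_nat_le l : (0 < dmax F)%N -> (sstar_nat l <= dmax F)%N.
Proof. by rewrite /sstar_nat; case: ifP => // _ /(ltn_pmod (sdeg H (blk l)))/ltnW. Qed.

Lemma Emat_mul_onto (h : 'cV[{poly K}]_n) :
  (forall r, (size (h r ord0) <= (sdeg H r).+1)%N) ->
  exists2 v : 'cV[{poly K}]_(nbar F H),
    Emat F H *m v = h & forall l, (size (v l ord0) <= (sstar_nat l).+1)%N.
Proof.
move=> hh.
have /fin_all_exists [c hc] : forall r : 'I_n, exists c : nat -> {poly K},
    [/\ h r ord0 = c 0%N + \sum_(1 <= l < (qq F H r).+1) c l * 'X^(rr F H r + l.-1 * dmax F),
        (size (c 0%N) <= (rr F H r).+1)%N &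
        forall l, (1 <= l <= qq F H r)%N -> (size (c l) <= (dmax F).+1)%N].
  by move=> r; apply: poly_block_decomp; rewrite /qq /rr -divn_eq.
exists (\mxcol_r (\col_(l < (qq F H r).+1) c r l)).
  apply/matrixP=> a b; rewrite ord1 /Emat mul_mxrow_mxcol summxE (bigD1 a) //=.
  rewrite big1 ?addr0 => [|r ne]; last first.
    by rewrite !mxE big1 // => l _; rewrite !mxE eq_sym (negPf ne) mul0r.
  have [-> _ _] := hc a; rewrite !mxE big_ord_recl !mxE eqxx /= mul1r.
  congr (_ + _); rewrite big_add1 /= big_mkord; apply: eq_bigr => l _.
  rewrite !mxE eqxx /= mulrC; congr (_ * 'X^_).
  have := divn_eq (sdeg H a) (dmax F); have := ltn_ord l.
  rewrite /qq /rr /bump /= add0n; move: (l : nat) => j.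
  move: (sdeg H a %/ dmax F)%N (sdeg H a %% dmax F)%N => q rm lq ->.
  have : (j * dmax F <= q * dmax F)%N by rewrite leq_mul2r ltnW ?orbT.
  by rewrite mulnBl; lia.
move=> l; rewrite !mxE /sstar_nat /blk /pos.
have [_ h0 h1] := hc (tagnat.sig1 l); case: eqP => [->|ne] //; apply: h1.
have := ltn_ord (tagnat.sig2 l); rewrite ltnS => ->; rewrite andbT lt0n.
by apply/eqP => e; apply: ne; apply: val_inj.
Qed.

Lemma size_Emat_mul (v : 'cV[{poly K}]_(nbar F H)) :
  (forall l, (size (v l ord0) <= (sstar_nat l).+1)%N) ->
  forall r, (size ((Emat F H *m v) r ord0) <= (sdeg H r).+1)%N.
Proof.
move=> hv r; rewrite mxE; apply: leq_trans (size_sum _ _ _) _.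
apply/bigmax_leqP => l _; rewrite /Emat !mxE -/(blk l) -/(pos l).
case: eqP => [->|_]; last by rewrite mul0r size_poly0.
have := hv l; rewrite /sstar_nat; case: eqP => [_ hvl|ne hvl].
  by rewrite mul1r (leq_trans hvl) // ltnS /rr leq_mod.
apply: leq_trans (size_polyMleq _ _) _; rewrite size_polyXn.
have hm : (0 < pos l <= qq F H (blk l))%N.
  have := ltn_ord (pos l); rewrite ltnS => ->; rewrite andbT lt0n.
  by apply/eqP => e; apply: ne; apply: val_inj.
move: hvl hm (divn_eq (sdeg H (blk l)) (dmax F)); move: (pos l : nat) => j.
rewrite /qq /rr; move: (sdeg H (blk l) %/ dmax F)%N (sdeg H (blk l) %% dmax F)%N => q rm.
move: (sdeg H (blk l)) (size (v l ord0)) (dmax F) => s sv d hvl hjq hs.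
have : (d <= (q - j.-1) * d)%N by rewrite leq_pmull // subn_gt0; lia.
have : ((q - j.-1) * d <= q * d)%N by rewrite leq_mul2r leq_subr orbT.
by move: hvl hs; move: (q * d)%N ((q - j.-1) * d)%N => A B; lia.
Qed.

End ExpansionMatrix.

Section PolyMatrix.
Variable K : fieldType.

Lemma det_full_col_rank n (A : 'M[{poly K}]_n) : \det A != 0 -> full_col_rank A.
Proof.
move=> detA v Av0; have : \adj A *m (A *m v) = 0 by rewrite Av0 mulmx0.
rewrite mulmxA mul_adj_mx mul_scalar_mx => /matrixP h; apply/matrixP => a b.
by have /eqP := h a b; rewrite !mxE mulf_eq0 (negPf detA) => /eqP.
Qed.

Lemma mul_selcols m k (P : pred 'I_k) (M : 'M[{poly K}]_(m, k)) (w : 'cV[{poly K}]_k) :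
  (forall l, w l ord0 != 0 -> P l) ->
  M *m w = selcols P M *m \col_x w (enum_val x) ord0.
Proof.
move=> wP; apply/matrixP => a b; rewrite ord1 !mxE (bigID P) /= [X in _ + X]big1 ?addr0.
  by rewrite (eq_bigl (mem P)) // big_enum_val; apply: eq_bigr => x _; rewrite !mxE.
by move=> l /negPf nPl; have [->|/wP] := eqVneq (w l ord0) 0; rewrite ?mulr0 ?nPl.
Qed.

Lemma col_reduced_size_solve m p (F : 'M[{poly K}]_(m, p)) (u : 'cV[{poly K}]_p) b :
  col_reduced F -> (forall i, (size ((F *m u) i ord0) <= b.+1)%N) ->
  forall a, (size (u a ord0) <= b.+1)%N.
Proof.
move=> Fred Fub a; have [->|ua] := eqVneq (u a ord0) 0; first by rewrite size_poly0.
have /cdeg_le_mul /(_ ua) : cdeg_le (fun=> 0) (F *m u) ord0 b.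
  by apply/cdeg_leP => i _; rewrite addr0 pdeg_le.
move=> /(_ Fred) /cdeg_leP Fa; have [c Fc] := col_reduced_cdeg Fred a.
case: cdegP Fc => // c' _ [i Fia _] _; have := Fa i Fia.
by rewrite /pdeg; lia.
Qed.

End PolyMatrix.

Section HermiteForm.
Variables (K : fieldType) (n : nat) (F H : 'M[{poly K}]_n).
Hypothesis FH : hermite_form F H.

Lemma hermite_right_factor : exists V, F = H *m V.
Proof.
have [[U [[V [UV _]] ->]] _ _ _] := FH.
by exists V; rewrite -mulmxA UV mulmx1.
Qed.

Lemma hermite_det_neq0 : \det F != 0 -> \det H != 0.
Proof.
have [[U [[V [UV _]] ->]] _ _ _] := FH => detF.
have UV1 : \det U * \det V = 1 by rewrite -det_mulmx UV det1.
rewrite det_mulmx mulf_neq0 //; apply/eqP => U0.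
by move: UV1; rewrite U0 mul0r => /eqP; rewrite eq_sym oner_eq0.
Qed.

Lemma size_hermite r i : (size (H r i) <= (sdeg H r).+1)%N.
Proof.
have [_ Hup _ Hred] := FH; rewrite /sdeg.
case: (ltngtP r i) => [ri|ir|/val_inj ->]; last exact: leqSpred.
  by rewrite Hup // size_poly0.
by have := Hred r i ir; lia.
Qed.

End HermiteForm.

Section KernelBasisHermite.
Variables (K : fieldType) (n k : nat) (F H : 'M[{poly K}]_n).
Variables (Q R : 'M[{poly K}]_(n, nbar F H)) (N : 'M[{poly K}]_(n + nbar F H, k)).
Hypotheses (Fred : col_reduced F) (FH : hermite_form F H).
Hypotheses (EFQR : Emat F H = F *m Q + R) (sizeR : forall i j, (size (R i j) <= dmax F)%N).
Hypothesis Nmin : minimal_kernel_basis (row_mx F (- R)) N (kshift F H).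

Let Nd := dsubmx N.
Let selected j := cdeg_le (fun i => - sstar F H i) Nd j 0.
Let Nbar := selcols selected Nd.
Let EN := Emat F H *m Nbar.

Let sstar_bounded (v : 'cV[{poly K}]_(nbar F H)) :=
  forall l, (size (v l ord0) <= (sstar_nat l).+1)%N.

Lemma kshift_lshift a : kshift F H (lshift _ a) = - ((2 * dmax F)%N)%:Z.
Proof. by rewrite /kshift (unsplitK (inl _ a) : split (lshift _ a) = inl a). Qed.

Lemma kshift_rshift a : kshift F H (rshift n a) = - sstar F H a.
Proof. by rewrite /kshift (unsplitK (inr _ a) : split (rshift n a) = inr a). Qed.

Lemma size_R_mul v : sstar_bounded v ->
  forall r, (size ((R *m v) r ord0) <= (2 * dmax F).+1)%N.
Proof.
move=> vb r; rewrite mxE; apply: leq_trans (size_sum _ _ _) _.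
apply/bigmax_leqP => l _; have [->|Rrl] := eqVneq (R r l) 0.
  by rewrite mul0r size_poly0.
have Rd := sizeR r l; have := size_poly_gt0 (R r l); rewrite Rrl => R0.
have /(sstar_nat_le l) := leq_trans R0 Rd; have := vb l.
have := size_polyMleq (R r l) (v l ord0); move: Rd R0.
by move: (size (R r l)) (size (v l ord0)) (size (R r l * v l ord0)) => a b c; lia.
Qed.

Lemma cdeg_le_kshift_col_mx (u : 'cV[{poly K}]_n) v :
  (forall a, (size (u a ord0) <= (2 * dmax F).+1)%N) -> sstar_bounded v ->
  cdeg_le (kshift F H) (col_mx u v) ord0 0.
Proof.
move=> ub vb; apply/cdeg_leP => a _; rewrite -(splitK a).
case: (split a) => b; rewrite ?col_mxEu ?col_mxEd ?kshift_lshift ?kshift_rshift.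
  by rewrite subr_le0 pdeg_le.
by rewrite sstarE subr_le0 pdeg_le.
Qed.

Lemma selected_kernel_support (w : 'cV[{poly K}]_k) :
  cdeg_le (kshift F H) (N *m w) ord0 0 -> forall l, w l ord0 != 0 -> selected l.
Proof.
have [_ Nred] := Nmin; move=> /(cdeg_le_mul Nred) Nwb l /Nwb /cdeg_leP Nl.
apply/cdeg_leP => a Nal; rewrite mxE in Nal *; have := Nl _ Nal.
by rewrite kshift_rshift /pdeg; lia.
Qed.

Lemma Nbar_span (u : 'cV[{poly K}]_n) v : F *m u = R *m v -> sstar_bounded v ->
  exists w, v = Nbar *m w.
Proof.
move=> Fuv vb; have [[_ _ Nall] _] := Nmin.
have /Nall [w uvNw] : row_mx F (- R) *m col_mx u v = 0.
  by rewrite mul_row_col mulNmx Fuv subrr.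
have ub : forall a, (size (u a ord0) <= (2 * dmax F).+1)%N.
  by apply: col_reduced_size_solve Fred _ => i; rewrite Fuv size_R_mul.
have := cdeg_le_kshift_col_mx ub vb; rewrite uvNw => /selected_kernel_support Nsel.
exists (\col_x w (enum_val x) ord0).
by rewrite -mul_selcols // /Nd mul_dsub_mx -uvNw col_mxKd.
Qed.

Lemma col_hermite_span i : exists w, col i H = EN *m w.
Proof.
have [[U [_ HFU]] _ _ _] := FH.
have [v Ev vb] : exists2 v, Emat F H *m v = col i H & sstar_bounded v.
  by apply: Emat_mul_onto => r; rewrite mxE (size_hermite FH).
have [w vw] : exists w, v = Nbar *m w.
  apply: (Nbar_span (u := col i U - Q *m v)) vb.
  have FUi : F *m col i U = col i H by rewrite HFU col_mul.
  by rewrite mulmxBr FUi -Ev EFQR mulmxDl mulmxA addrC addKr.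
by exists w; rewrite -Ev vw mulmxA.
Qed.

Lemma EN_span_hermite : exists W, EN = H *m W.
Proof.
have [V FHV] := hermite_right_factor FH; have [[_ NA0 _] _] := Nmin.
have FNu : F *m usubmx N = R *m Nd.
  move: NA0; rewrite -{1}(vsubmxK N) mul_row_col mulNmx => /eqP.
  by rewrite subr_eq0 => /eqP.
have ENd : Emat F H *m Nd = F *m (Q *m Nd + usubmx N).
  by rewrite EFQR mulmxDl mulmxDr mulmxA FNu.
exists (V *m colsub (@enum_val _ (mem selected)) (Q *m Nd + usubmx N)).
by rewrite /EN /Nbar /selcols mulmxA -FHV !mulmx_colsub ENd.
Qed.

Lemma sstar_bounded_Nbar j : sstar_bounded (col j Nbar).
Proof.
move=> l; rewrite 2!mxE; have /cdeg_leP Nsel := enum_valP j.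
have [->|Nl] := eqVneq (Nd l (enum_val j)) 0; first by rewrite size_poly0.
by have := Nsel l Nl; rewrite sstarE subr_le0 pdeg_le.
Qed.

Lemma size_EN r j : (size (EN r j) <= (sdeg H r).+1)%N.
Proof.
have := size_Emat_mul (sstar_bounded_Nbar j) r.
by rewrite -col_mul mxE.
Qed.

Lemma cdeg_EN j : col j EN != 0 -> cdeg (fun i => - (sdeg H i)%:Z) EN j = Some 0.
Proof.
move=> ENj; have [W EHW] := EN_span_hermite; have [_ Hup Hmon _] := FH.
have /(lower_triangular_mul_col Hup) [i Wij ENi] : col j W != 0.
  by apply: contraNneq ENj; rewrite EHW col_mul => ->; rewrite mulmx0.
rewrite -EHW in ENi.
have ENi0 : EN i j != 0 by rewrite ENi mulf_neq0 // monic_neq0 ?Hmon.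
apply: (cdeg_eq (i := i)) => // [i' _|].
  by rewrite subr_le0 pdeg_le size_EN.
rewrite subr_ge0 ENi /pdeg /sdeg size_mul ?(monic_neq0 (Hmon i)) //.
have := size_poly_gt0 (W i j); rewrite Wij lez_nat.
by move: (size (H i i)) (size (W i j)) => a b; lia.
Qed.

Lemma column_basis_EN : \det F != 0 -> column_basis EN H.
Proof.
move=> detF; split; first exact: det_full_col_rank (hermite_det_neq0 FH detF).
  by have [W ->] := EN_span_hermite; exists W.
have /fin_all_exists [w Hw] := col_hermite_span.
exists (\matrix_(a, i) w i a ord0); apply/matrixP => r i.
by have /matrixP/(_ r ord0) := Hw i; rewrite !mxE => ->; apply: eq_bigr => a _; rewrite !mxE.
Qed.

End KernelBasisHermite.

Theorem mainTheorem4 (K : fieldType) (n : nat) (F H : 'M[{poly K}]_n)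
    (Q R : 'M[{poly K}]_(n, nbar F H)) (k : nat)
    (N : 'M[{poly K}]_(n + nbar F H, k)) :
  \det F != 0 ->
  col_reduced F ->
  hermite_form F H ->
  Emat F H = F *m Q + R ->
  (forall i j, (size (R i j) <= dmax F)%N) ->
  minimal_kernel_basis (row_mx F (- R)) N (kshift F H) ->
  let Nd := dsubmx N in
  let Nbar := selcols
      (fun j => cdeg_le (fun i => - sstar F H i) Nd j 0) Nd in
  let EN := Emat F H *m Nbar in
  column_basis EN H /\
  (forall j, col j EN != 0 ->
     cdeg (fun i => - (sdeg H i)%:Z) EN j = Some 0).
Proof.
move=> detF Fred FH EFQR sizeR Nmin Nd Nbar EN.
split; first exact: column_basis_EN Fred FH EFQR sizeR Nmin detF.
by move=> j; apply: cdeg_EN FH EFQR Nmin j.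
Qed.
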